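(* Let $\Delta\ge 4$ be an integer and let $c_1,\dots,c_\Delta$ be defined by $c_\Delta=\frac{1}{\Delta}$ and $ic_i+c_{i+1}=1$ for $i=1,\dots,\Delta-1$. Let $\Delta'$ be an integer with $3\le \Delta'<\Delta$ and let $G\in\mathcal{G}_{\Delta'}$. Then $$\alpha(G)\ge \sum_{i=1}^{\Delta'} c_i|V_i(G)|.$$
   Context: All graphs are simple, finite and undirected. For an integer $D\ge 3$, $\mathcal{G}_{D}$ denotes the set of connected graphs $G\neq K_{D+1}$ with maximum degree $D$. For a graph $G$ and $i\ge 1$, $V_i(G)$ is the set of vertices of $G$ of degree $i$. $\alpha(G)$ is the independence number of $G$. *)

From HB Require Import structures.
From mathcomp Require Import all_boot all_order all_algebra.
Set Implicit Arguments. Unset Strict Implicit. Unset Printing Implicit Defensive.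
Import Order.TTheory GRing.Theory Num.Theory.

Definition simple_graph (T : finType) (e : rel T) : Prop :=
  symmetric e /\ irreflexive e.

Definition deg (T : finType) (e : rel T) (x : T) : nat := #|[set y | e x y]|.

Definition Vdeg (T : finType) (e : rel T) (i : nat) : {set T} :=
  [set x | deg e x == i].

Definition connected_graph (T : finType) (e : rel T) : Prop :=
  forall x y : T, connect e x y.

Definition max_degree (T : finType) (e : rel T) (D : nat) : Prop :=
  (forall x, deg e x <= D) /\ (exists x, deg e x = D).

Definition is_complete (T : finType) (e : rel T) (n : nat) : Prop :=
  #|T| = n /\ (forall x y : T, x != y -> e x y).

Definition in_GD (D : nat) (T : finType) (e : rel T) : Prop :=
  simple_graph e /\ connected_graph e /\ max_degree e D /\ ~ is_complete e D.+1.

Definition independent (T : finType) (e : rel T) (S : {set T}) : bool :=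
  [forall x in S, forall y in S, ~~ e x y].

Definition alpha (T : finType) (e : rel T) : nat :=
  \max_(S : {set T} | independent e S) #|S|.

(* c_aux D n = c_{D-n}, with c_D = 1/D and c_i = (1 - c_{i+1}) / i. *)
Fixpoint c_aux (D n : nat) : rat :=
  match n with
  | 0 => (D%:R)^-1
  | n'.+1 => (1 - c_aux D n') / ((D - n)%:R)
  end%R.

Definition c (D i : nat) : rat := c_aux D (D - i).

(* For an induced subgraph G[S], give a vertex of degree d in G[S] the weight
   1/(d+1) if its component is a clique, and c_d otherwise.  By induction on
   |S| the total weight is at most alpha(G[S]).  A clique component weighs 1 and
   is traded for one vertex of an independent set.  Otherwise let v have maximum
   degree M.  If a non-neighbour y of v lies in a clique component Q of G[S-v],
   then Q contains a neighbour of v and the recurrence i c_i + c_(i+1) = 1 bounds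
   its weight in G[S] by 1, so Q is traded for y.  If not, deleting v loses c_M
   while each of its M neighbours gains at least c_(M-1) - c_M, and
   c_M <= M (c_(M-1) - c_M).  A connected graph that is not complete has no clique
   component, and then its total weight is sum_i c_i |V_i(G)|. *)

From mathcomp Require Import all_boot all_order all_algebra.
From mathcomp Require Import ring lra zify.
Set Implicit Arguments. Unset Strict Implicit. Unset Printing Implicit Defensive.
Import Order.TTheory GRing.Theory Num.Theory.
Local Open Scope ring_scope.

Lemma c_recurrence D j : (0 < j < D)%N -> j%:R * c D j + c D j.+1 = 1.
Proof.
case/andP=> j_gt0 jD; rewrite /c.
have -> : (D - j = (D - j.+1).+1)%N by lia.
rewrite /=; have -> : (D - (D - j.+1).+1 = j)%N by lia.
have jn0 : (j%:R : rat) != 0 by rewrite pnatr_eq0 -lt0n.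
by field.
Qed.

Lemma c_bounds D j : (0 < j <= D)%N -> 1 <= j.+1%:R * c D j /\ j%:R * c D j <= 1.
Proof.
case/andP=> j_gt0 /subnKC <-; move: (D - j)%N => k.
elim: k j j_gt0 => [|k IH] j j_gt0.
  have c_top : j%:R * c (j + 0) j = 1.
    by rewrite /c addn0 subnn /= mulfV // pnatr_eq0 -lt0n.
  have : 0 <= c (j + 0) j by rewrite /c addn0 subnn /= invr_ge0 ler0n.
  by rewrite -addn1 natrD mulrDl c_top; lra.
have [lo hi] := IH j.+1 isT; rewrite !addSnnS in lo hi.
have rec := @c_recurrence (j + k.+1) j; rewrite j_gt0 /= in rec.
have {}rec := rec (ltac:(lia)).
rewrite -[j.+2]addn1 -[j.+1]addn1 !natrD in lo hi rec *.
have : (1 : rat) <= j%:R by rewrite ler1n.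
split; nra.
Qed.

Section ExtendedCoefficients.
Variable D : nat.

(* [c D 0] is a junk value (a division by 0); [c_0 = 1] keeps the sequence
   antitone on [0, D]. *)
Definition c_ext k : rat := if k is 0%N then 1 else c D k.

Lemma c_ext_recurrence j : (0 < j < D)%N -> j%:R * c_ext j + c_ext j.+1 = 1.
Proof. by case: j => // j; apply: c_recurrence. Qed.

Lemma c_ext_bounds j : (j <= D)%N -> 1 <= j.+1%:R * c_ext j /\ j%:R * c_ext j <= 1.
Proof. by case: j => [|j] jD; [rewrite mul0r mulr1 ler01 | apply: c_bounds]. Qed.

Lemma c_ext_ge0 j : (j <= D)%N -> 0 <= c_ext j.
Proof.
move=> /c_ext_bounds[lo _]; rewrite -(pmulr_rge0 _ (ltr0Sn _ j)).
exact: le_trans ler01 lo.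
Qed.

Lemma c_ext_antitone i j : (i <= j <= D)%N -> c_ext j <= c_ext i.
Proof.
case/andP=> ij jD; have iD := leq_trans ij jD.
have step k : (k < D)%N -> c_ext k.+1 <= c_ext k.
  move=> kD; have [lo _] := c_ext_bounds (ltnW kD); have [_ hi] := c_ext_bounds kD.
  by rewrite -(ler_pM2l (ltr0Sn _ k)); apply: le_trans lo.
apply: (@Order.NatMonotonyTheory.nonincn_inP _ _ [pred k | k <= D]%N) => //.
- by move=> a b /= _ bD k /andP[_ /ltnW /leq_trans]; apply.
- by move=> k _; apply: step.
Qed.

Lemma c_ext_clique m d : (m < d < D)%N -> c_ext d + m%:R * c_ext m <= 1.
Proof.
case/andP=> md dD; apply: le_trans (_ : c_ext m.+1 + m%:R * c_ext m <= 1).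
  by rewrite lerD2r; apply: c_ext_antitone; rewrite md ltnW.
case: m md => [|m] md; last by rewrite addrC c_ext_recurrence //; lia.
by have [_] := c_ext_bounds (ltnW (leq_ltn_trans md dD)); rewrite mul1r mul0r addr0.
Qed.

Definition c_gap m := c_ext m.-1 - c_ext m.

Lemma c_gap_scaled m : (2 <= m < D)%N -> m.-1%:R * c_gap m = c_ext m.+1.
Proof.
case: m => [|m] // /andP[m_ge2 mD].
change (m%:R * (c_ext m - c_ext m.+1) = c_ext m.+2).
have rec1 : m%:R * c_ext m + c_ext m.+1 = 1 by apply: c_ext_recurrence; lia.
have rec2 : m.+1%:R * c_ext m.+1 + c_ext m.+2 = 1 by apply: c_ext_recurrence; lia.
rewrite -natr1 in rec2; lra.
Qed.

Lemma c_gap_antitone a b : (2 <= a <= b)%N -> (b < D)%N -> c_gap b <= c_gap a.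
Proof.
case/andP=> a_ge2 ab bD.
have step m : (2 <= m)%N -> (m.+1 < D)%N -> c_gap m.+1 <= c_gap m.
  case: m => [|[|m]] // _ mD.
  have s1 : m.+1%:R * c_gap m.+2 = c_ext m.+3 by apply: c_gap_scaled; lia.
  have s2 : m.+2%:R * c_gap m.+3 = c_ext m.+4 by apply: c_gap_scaled; lia.
  have dec : c_ext m.+4 <= c_ext m.+3 by apply: c_ext_antitone; lia.
  have pos : 0 <= c_ext m.+3 by apply: c_ext_ge0; lia.
  have : (1 : rat) <= m.+1%:R by rewrite ler1n.
  rewrite -natr1 in s2; nra.
apply: (@Order.NatMonotonyTheory.nonincn_inP _ _ [pred k | 2 <= k < D]%N) => //=.
- move=> x y /andP[x2 _] /andP[_ yD] k /andP[xk ky].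
  by rewrite inE (leq_trans x2 (ltnW xk)) (ltn_trans ky yD).
- by move=> k /andP[k2 _] /andP[_ kD]; apply: step.
- by rewrite inE (leq_trans a_ge2 ab).
- by rewrite inE a_ge2 (leq_ltn_trans ab).
Qed.

Lemma c_gap_le_clique k M : (k.+2 <= M < D)%N -> c_gap M <= k.+1%:R^-1 - c_ext k.+1.
Proof.
case/andP=> kM MD; apply: le_trans (@c_gap_antitone k.+2 M _ MD) _; first by rewrite kM.
have scaled : k.+1%:R * c_gap k.+2 = c_ext k.+3 by apply: c_gap_scaled; lia.
have dec : c_ext k.+3 <= c_ext k.+2 by apply: c_ext_antitone; lia.
have rec : k.+1%:R * c_ext k.+1 + c_ext k.+2 = 1 by apply: c_ext_recurrence; lia.
rewrite -(ler_pM2l (ltr0Sn _ k)) scaled mulrBr mulfV ?pnatr_eq0 //; lra.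
Qed.

Lemma c_ext_le_gap M : (2 <= M < D)%N -> c_ext M <= M%:R * c_gap M.
Proof.
case: M => [|[|m]] // mD.
have scaled : m.+1%:R * c_gap m.+2 = c_ext m.+3 by apply: c_gap_scaled.
have rec : m.+2%:R * c_ext m.+2 + c_ext m.+3 = 1 by apply: c_ext_recurrence; lia.
have [lo _] := @c_ext_bounds m.+3 (ltac:(lia)).
have pos : 0 <= c_ext m.+3 by apply: c_ext_ge0; lia.
have : (1 : rat) <= m.+1%:R by rewrite ler1n.
rewrite -!natr1 in rec lo *.
nra.
Qed.

End ExtendedCoefficients.

Section InducedSubgraphs.
Variables (T : finType) (e : rel T).
Hypotheses (e_sym : symmetric e) (e_irr : irreflexive e).
Implicit Types (S A I : {set T}) (u v x y z : T).

Definition nbh S x := [set y in S | e x y].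
Definition sdeg S x := #|nbh S x|.
Definition cnbh S x := [set y in S | (y == x) || e x y].

(* All neighbours of [x] share its closed neighbourhood, which is then the
   vertex set of the component of [x] in [S], and a clique. *)
Definition in_clique_comp S x := [forall y in nbh S x, cnbh S y == cnbh S x].

Definition alpha_in S := \max_(I : {set T} | (I \subset S) && independent e I) #|I|.

Lemma nbh_subset S x : nbh S x \subset S.
Proof. by apply/subsetP => y; rewrite inE => /andP[]. Qed.

Lemma cnbh_subset S x : cnbh S x \subset S.
Proof. by apply/subsetP => y; rewrite inE => /andP[]. Qed.

Lemma cnbh_id S x : x \in S -> x \in cnbh S x.
Proof. by move=> xS; rewrite inE xS eqxx. Qed.

Lemma cnbhD1 S x : cnbh S x :\ x = nbh S x.
Proof.
apply/setP => y; rewrite !inE; case: (eqVneq y x) => [->|] /=; last by [].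
by rewrite e_irr andbF.
Qed.

Lemma card_cnbh S x : x \in S -> #|cnbh S x| = (sdeg S x).+1.
Proof. by move=> xS; rewrite (cardsD1 x) cnbh_id // cnbhD1. Qed.

Lemma nbh_subset_cnbh S x : nbh S x \subset cnbh S x.
Proof. by rewrite -cnbhD1 subD1set. Qed.

Lemma cnbh_setD1_nbr S v y : v \in S -> e y v -> cnbh S y = v |: cnbh (S :\ v) y.
Proof.
move=> vS eyv; apply/setP => t; rewrite !inE.
by case: (eqVneq t v) => [->|] //=; rewrite vS eyv orbT.
Qed.

Lemma sdeg_setT x : sdeg [set: T] x = deg e x.
Proof. by apply: eq_card => y; rewrite !inE. Qed.

Lemma sdeg_le_deg S x : (sdeg S x <= deg e x)%N.
Proof. by apply: subset_leq_card; apply/subsetP => y; rewrite !inE => /andP[]. Qed.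

Lemma sdegS S S' x : S' \subset S -> (sdeg S' x <= sdeg S x)%N.
Proof.
move=> /subsetP sub; apply: subset_leq_card; apply/subsetP => y.
by rewrite !inE => /andP[/sub -> ->].
Qed.

Lemma sdeg_ltS S S' x u : S' \subset S -> u \in nbh S x -> u \notin S' ->
  (sdeg S' x < sdeg S x)%N.
Proof.
move=> sub uN uS'; apply: proper_card; rewrite properE.
apply/andP; split; first by apply/subsetP => y; rewrite !inE => /andP[/(subsetP sub) -> ->].
by apply/subsetPn; exists u; rewrite // inE (negbTE uS').
Qed.

Lemma sdeg_setD1_nbr S v u : v \in S -> u \in nbh S v -> sdeg S u = (sdeg (S :\ v) u).+1.
Proof.
move=> vS; rewrite inE /sdeg => /andP[_ evu].
have -> : nbh S u = v |: nbh (S :\ v) u.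
  by apply/setP => t; rewrite !inE; case: eqVneq => [->|] //=; rewrite vS e_sym evu.
by rewrite cardsU1 !inE eqxx.
Qed.

Lemma sdeg_eq0_clique S x : sdeg S x = 0%N -> in_clique_comp S x.
Proof. by move/eqP; rewrite cards_eq0 => /eqP N0; apply/forall_inP => y; rewrite N0 inE. Qed.

Lemma in_clique_comp_cnbh S x y : x \in S -> in_clique_comp S x -> y \in cnbh S x ->
  [/\ y \in S, in_clique_comp S y, cnbh S y = cnbh S x & sdeg S y = sdeg S x].
Proof.
move=> xS /forall_inP cx; rewrite inE => /andP[yS /predU1P[->|exy]].
  by split => //; apply/forall_inP.
have yN : y \in nbh S x by rewrite inE yS exy.
have cnbh_yx : cnbh S y = cnbh S x by apply/eqP; apply: cx.
split => //; last by apply: succn_inj; rewrite -!card_cnbh // cnbh_yx.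
apply/forall_inP => z zN; rewrite cnbh_yx.
have : z \in cnbh S x by rewrite -cnbh_yx (subsetP (nbh_subset_cnbh S y)).
by rewrite inE => /andP[zS /predU1P[->|exz]] //; apply: cx; rewrite inE zS.
Qed.

Lemma in_clique_comp_adj S x y z : x \in S -> in_clique_comp S x ->
  y \in cnbh S x -> z \in cnbh S x -> y != z -> e y z.
Proof.
move=> xS cx yC; have [_ _ <- _] := in_clique_comp_cnbh xS cx yC.
by rewrite inE eq_sym => /andP[_ /predU1P[->|]]; rewrite ?eqxx.
Qed.

Lemma cnbh_sym S x y : x \in S -> y \in cnbh S x -> x \in cnbh S y.
Proof.
move=> xS; rewrite !inE xS eq_sym => /andP[_ /predU1P[->|]]; rewrite ?eqxx //.
by rewrite e_sym => ->; rewrite orbT.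
Qed.

Lemma nbh_restrict S S' x : S' \subset S -> nbh S x \subset S' -> nbh S' x = nbh S x.
Proof.
move=> /subsetP sub /subsetP N'; apply/setP => y; rewrite !inE.
apply/andP/andP => [[/sub-> ->] | [yS exy]] //.
by split => //; apply: N'; rewrite inE yS exy.
Qed.

Lemma cnbh_restrict S S' x : S' \subset S -> x \in S' -> nbh S x \subset S' ->
  cnbh S' x = cnbh S x.
Proof.
move=> sub xS' N'; have xS := subsetP sub x xS'.
by rewrite -(setD1K (cnbh_id xS')) -[RHS](setD1K (cnbh_id xS)) !cnbhD1 (nbh_restrict sub N').
Qed.

Lemma in_clique_comp_restrict S S' x : S' \subset S -> x \in S' -> nbh S x \subset S' ->
  {in nbh S x, forall y, nbh S y \subset S'} -> in_clique_comp S' x = in_clique_comp S x.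
Proof.
move=> sub xS' N' NN'; rewrite /in_clique_comp (nbh_restrict sub N').
apply: eq_forallb_in => y yN; rewrite (cnbh_restrict sub xS' N').
by rewrite (cnbh_restrict sub (subsetP N' y yN) (NN' y yN)).
Qed.

Lemma nbh_setD1 S v u : u \in nbh S v -> u \in S :\ v.
Proof.
rewrite !inE => /andP[-> evu]; rewrite andbT.
by apply: contraTneq evu => ->; rewrite e_irr.
Qed.

Lemma nbh_setD1_nonadj S v u : u \in S :\ v -> ~~ e v u -> nbh S u \subset S :\ v.
Proof.
move=> uS1 nvu; apply/subsetP => t; rewrite !inE => /andP[tS eut]; rewrite tS andbT.
by apply: contraNneq nvu => tv; rewrite -tv e_sym.
Qed.

Lemma nbh_setD_cnbh S x y : x \in S -> in_clique_comp S x -> y \in S :\: cnbh S x ->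
  nbh S y \subset S :\: cnbh S x.
Proof.
move=> xS cx; rewrite inE => /andP[yC yS]; apply/subsetP => z.
rewrite inE => /andP[zS eyz]; rewrite in_setD zS andbT; apply: contraNN yC => zC.
have [_ _ <- _] := in_clique_comp_cnbh xS cx zC.
by rewrite inE yS e_sym eyz orbT.
Qed.

Lemma independentP I : reflect {in I &, forall x y, ~~ e x y} (independent e I).
Proof.
rewrite /independent; apply: (iffP forall_inP) => [indI x y xI yI | indI x xI].
  exact: (forall_inP (indI x xI)).
by apply/forall_inP => y; apply: indI.
Qed.

Lemma alpha_in_ge S I : I \subset S -> independent e I -> (#|I| <= alpha_in S)%N.
Proof.
move=> IS indI.
by apply: (@leq_bigmax_cond _ (fun J : {set T} => (J \subset S) && independent e J)); rewrite IS.
Qed.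

Lemma alpha_in_witness S :
  exists2 I : {set T}, (I \subset S) && independent e I & #|I| = alpha_in S.
Proof.
have : (0 < #|[pred I : {set T} | (I \subset S) && independent e I]|)%N.
  by apply/card_gt0P; exists set0; rewrite inE sub0set; apply/independentP => x; rewrite inE.
by case/(eq_bigmax_cond (fun I : {set T} => #|I|)) => I; exists I.
Qed.

Lemma alpha_inS S S' : S' \subset S -> (alpha_in S' <= alpha_in S)%N.
Proof.
move=> sub; have [I /andP[IS' indI] <-] := alpha_in_witness S'.
exact: alpha_in_ge (subset_trans IS' sub) indI.
Qed.

Lemma alpha_in_setT : alpha e = alpha_in [set: T].
Proof. by apply: eq_bigl => I; rewrite subsetT. Qed.

Lemma alpha_in_setD S A y : A \subset S -> y \in A -> nbh S y \subset A ->
  ((alpha_in (S :\: A)).+1 <= alpha_in S)%N.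
Proof.
move=> AS yA /subsetP yN; have [I /andP[IS indI] <-] := alpha_in_witness (S :\: A).
have IA z : z \in I -> z \in S /\ z \notin A by move/(subsetP IS); rewrite inE => /andP[].
have yI : y \notin I by apply/negP => /IA[_]; rewrite yA.
have nadj z : z \in I -> ~~ e y z.
  by move=> /IA[zS zA]; apply: contra zA => eyz; apply: yN; rewrite inE zS.
have -> : (#|I|).+1 = #|y |: I| by rewrite cardsU1 yI.
apply: alpha_in_ge.
  by apply/subsetP => z /setU1P[->|/IA[]//]; apply: (subsetP AS).
apply/independentP => a b /setU1P[->|aI] /setU1P[->|bI]; rewrite ?e_irr ?nadj //.
  by rewrite e_sym nadj.
exact: (independentP _ indI).
Qed.

Lemma connected_clique_comp_complete x z : connected_graph e ->
  in_clique_comp [set: T] x -> is_complete e (deg e z).+1.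
Proof.
move=> conn cx; have xT : x \in [set: T] by rewrite inE.
have cnbh_closed : closed e (cnbh [set: T] x).
  move=> a b eab; apply/idP/idP => C.
    by have [_ _ <- _] := in_clique_comp_cnbh xT cx C; rewrite !inE eab orbT.
  by have [_ _ <- _] := in_clique_comp_cnbh xT cx C; rewrite !inE e_sym eab orbT.
have allC y : y \in cnbh [set: T] x.
  by rewrite -(closed_connect cnbh_closed (conn x y)) cnbh_id.
rewrite -sdeg_setT; split=> [|a b]; last exact: in_clique_comp_adj xT cx (allC a) (allC b).
have [_ _ _ ->] := in_clique_comp_cnbh xT cx (allC z).
rewrite -card_cnbh //; apply: eq_card => y; by rewrite allC.
Qed.

Section Weights.
Variable D : nat.
Hypothesis deg_lt : forall x, (deg e x < D)%N.

Definition weight S x : rat :=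
  if in_clique_comp S x then (sdeg S x).+1%:R^-1 else c_ext D (sdeg S x).

Definition total_weight S := \sum_(x in S) weight S x.

Lemma sdeg_lt S x : (sdeg S x < D)%N.
Proof. exact: leq_ltn_trans (sdeg_le_deg S x) (deg_lt x). Qed.

Lemma c_ext_sdegS S S' x : S' \subset S -> c_ext D (sdeg S x) <= c_ext D (sdeg S' x).
Proof. by move=> sub; apply: c_ext_antitone; rewrite sdegS // ltnW ?sdeg_lt. Qed.

Lemma sum_weight_clique_comp S x : x \in S -> in_clique_comp S x ->
  \sum_(z in cnbh S x) weight S z = 1.
Proof.
move=> xS cx; rewrite (eq_bigr (fun=> (sdeg S x).+1%:R^-1)); last first.
  by move=> y /(in_clique_comp_cnbh xS cx)[_ cy _ dy]; rewrite /weight cy dy.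
by rewrite sumr_const card_cnbh // -[LHS]mulr_natr mulVf ?pnatr_eq0.
Qed.

Lemma total_weight_restrict S S' : S' \subset S -> {in S', forall y, nbh S y \subset S'} ->
  \sum_(y in S') weight S y = total_weight S'.
Proof.
move=> sub N'; apply: eq_bigr => y yS'; have yN := N' y yS'.
have NN' : {in nbh S y, forall z, nbh S z \subset S'} by move=> z /(subsetP yN) /N'.
by rewrite /weight (in_clique_comp_restrict sub yS' yN NN') /sdeg (nbh_restrict sub yN).
Qed.

Lemma total_weight_clique_comp S x : x \in S -> in_clique_comp S x ->
  total_weight S = 1 + total_weight (S :\: cnbh S x).
Proof.
move=> xS cx; rewrite {1}/total_weight (big_setID (cnbh S x)) (setIidPr (cnbh_subset S x)).
rewrite sum_weight_clique_comp // total_weight_restrict ?subsetDl //.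
by move=> y; apply: nbh_setD_cnbh.
Qed.

Lemma sum_c_ext_clique_le1 S S' q : S' \subset S -> q \in S' -> in_clique_comp S' q ->
  (sdeg S' q < sdeg S q)%N -> \sum_(z in cnbh S' q) c_ext D (sdeg S z) <= 1.
Proof.
move=> sub qS' cq q_lt; rewrite (big_setD1 q) ?cnbh_id // cnbhD1 /=.
apply: le_trans (c_ext_clique (_ : sdeg S' q < sdeg S q < D)%N); last by rewrite q_lt sdeg_lt.
rewrite lerD2l mulr_natl -sumr_const; apply: ler_sum => z zN.
have [_ _ _ <-] := in_clique_comp_cnbh qS' cq (subsetP (nbh_subset_cnbh S' q) z zN).
exact: c_ext_sdegS.
Qed.

Lemma weight_setD1_nbr S v z : v \in S -> z \in nbh S v -> (sdeg S z <= sdeg S v)%N ->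
  (in_clique_comp (S :\ v) z -> (sdeg (S :\ v) z).+2 <= sdeg S v)%N ->
  c_ext D (sdeg S z) + c_gap D (sdeg S v) <= weight (S :\ v) z.
Proof.
move=> vS zN z_le short; have vD := sdeg_lt S v.
rewrite /weight (sdeg_setD1_nbr vS zN) in z_le *; case: ifPn => [cz | ncz].
  have := @c_gap_le_clique D (sdeg (S :\ v) z) (sdeg S v); rewrite short // vD.
  by move=> /(_ isT); rewrite lerBrDr addrC.
have d_gt0 : (0 < sdeg (S :\ v) z)%N.
  by rewrite lt0n; apply: contra ncz => /eqP/sdeg_eq0_clique.
have := @c_gap_antitone D (sdeg (S :\ v) z).+1 (sdeg S v); rewrite z_le ltnS d_gt0.
by move=> /(_ isT vD); rewrite /c_gap /= => gap_le; lra.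
Qed.

Section NoCliqueComponent.
Variable S : {set T}.
Hypothesis no_clique : forall x, x \in S -> ~~ in_clique_comp S x.

(* A clique component of [S'] avoiding [v] would be one of [S], so every clique
   component of [S'] is the one of [v]. *)
Lemma sum_c_ext_le_total_weight S' v : S' \subset S -> v \in S' ->
  {in S', forall z, z != v -> nbh S z \subset S'} -> (sdeg S' v < sdeg S v)%N ->
  \sum_(z in S') c_ext D (sdeg S z) <= total_weight S'.
Proof.
move=> sub vS' closed_S' v_lt.
have clique_at_v z : z \in S' -> in_clique_comp S' z -> z \in cnbh S' v.
  move=> zS' cz; apply: contraTT cz; rewrite inE zS' negb_or => /andP[zv nvz].
  have zN := closed_S' z zS' zv.
  rewrite (in_clique_comp_restrict sub zS' zN) ?no_clique ?(subsetP sub) //.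
  move=> u uN; apply: closed_S' (subsetP zN u uN) _.
  by apply: contraNneq nvz => uv; move: uN; rewrite uv inE e_sym => /andP[].
have weight_ge z : z \in S' -> ~~ in_clique_comp S' z -> c_ext D (sdeg S z) <= weight S' z.
  by move=> _ cz; rewrite /weight (negbTE cz); apply: c_ext_sdegS.
rewrite /total_weight; have [cv | ncv] := boolP (in_clique_comp S' v).
  rewrite (big_setID (cnbh S' v)) [X in _ <= X](big_setID (cnbh S' v)) /=.
  rewrite (setIidPr (cnbh_subset S' v)).
  rewrite sum_weight_clique_comp //; apply: lerD; first exact: sum_c_ext_clique_le1.
  apply: ler_sum => z /setDP[zS' zC]; apply: weight_ge => //.
  by apply: contra zC; apply: clique_at_v.
apply: ler_sum => z zS'; apply: weight_ge => //; apply: contra ncv => cz.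
by have [] := in_clique_comp_cnbh zS' cz (cnbh_sym vS' (clique_at_v z zS' cz)).
Qed.

Lemma sum_c_ext_le_cut_clique v y : v \in S -> y \in S :\ v -> ~~ e v y ->
  in_clique_comp (S :\ v) y ->
  \sum_(z in S) c_ext D (sdeg S z) <= 1 + total_weight (S :\: cnbh (S :\ v) y).
Proof.
move=> vS yS1 nvy cy; set Q := cnbh (S :\ v) y.
have QS1 : Q \subset S :\ v := cnbh_subset _ _.
have QS : Q \subset S := subset_trans QS1 (subD1set S v).
have vQ : v \notin Q by apply/negP => /(subsetP QS1); rewrite !inE eqxx.
have [q qQ evq] : exists2 q, q \in Q & e v q.
  apply/exists_inP; apply: contraT => /exists_inPn nvQ.
  have := no_clique (subsetP (subD1set S v) y yS1).
  rewrite -(in_clique_comp_restrict (subD1set S v) yS1) ?cy //; first exact: nbh_setD1_nonadj.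
  move=> u uN; have uS1 : u \in S :\ v by apply: (subsetP (nbh_setD1_nonadj yS1 nvy)).
  apply: (nbh_setD1_nonadj uS1); apply: nvQ.
  by rewrite inE uS1; move: uN; rewrite inE => /andP[_ ->]; rewrite orbT.
rewrite (big_setID Q) (setIidPr QS); apply: lerD.
  have [qS1 cq Qq _] := in_clique_comp_cnbh yS1 cy qQ; rewrite /Q -Qq.
  apply: sum_c_ext_clique_le1 (subD1set S v) qS1 cq _.
  by apply: (sdeg_ltS (u := v) (subD1set S v)); rewrite !inE ?eqxx // vS e_sym evq.
apply: (sum_c_ext_le_total_weight (v := v)); rewrite ?subsetDl ?in_setD ?vQ //.
- move=> z /setDP[zS zQ] zv; apply/subsetP => t tN.
  rewrite inE (subsetP (nbh_subset _ _) t tN) andbT; have [-> // | tv] := eqVneq t v.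
  have zSQ : z \in (S :\ v) :\: Q by rewrite in_setD zQ in_setD1 zv zS.
  have := subsetP (nbh_setD_cnbh yS1 cy zSQ) t; rewrite !inE tv.
  by move: tN; rewrite inE => /andP[-> ->] /(_ isT) /andP[].
- apply: (sdeg_ltS (u := q) (subsetDl S Q)); last by rewrite in_setD qQ.
  by rewrite inE (subsetP QS q qQ).
Qed.

Lemma clique_nbr_sdeg_setD1_lt v u : v \in S -> u \in nbh S v -> in_clique_comp (S :\ v) u ->
  cnbh (S :\ v) u \subset nbh S v -> ((sdeg (S :\ v) u).+2 <= sdeg S v)%N.
Proof.
move=> vS uN cu QN; have uS1 := nbh_setD1 uN.
rewrite ltn_neqAle -card_cnbh // subset_leq_card // andbT.
apply: contra (no_clique vS) => /eqP card_eq.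
have Q_eq : cnbh (S :\ v) u = nbh S v by apply/eqP; rewrite eqEcard QN card_eq /=.
apply/forall_inP => y yN; have yQ : y \in cnbh (S :\ v) u by rewrite Q_eq.
have [_ _ Qy _] := in_clique_comp_cnbh uS1 cu yQ.
rewrite (cnbh_setD1_nbr vS (y := y)) ?Qy ?Q_eq; last by move: yN; rewrite inE e_sym => /andP[].
by rewrite -(setD1K (cnbh_id vS)) cnbhD1.
Qed.

Lemma sum_c_ext_le_del_maxdeg v : v \in S -> {in S, forall z, sdeg S z <= sdeg S v}%N ->
  {in S :\ v, forall y, ~~ e v y -> ~~ in_clique_comp (S :\ v) y} ->
  \sum_(z in S) c_ext D (sdeg S z) <= total_weight (S :\ v).
Proof.
move=> vS vmax far_no_clique; set M := sdeg S v.
have nbr_short u : u \in nbh S v -> in_clique_comp (S :\ v) u ->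
    ((sdeg (S :\ v) u).+2 <= M)%N.
  move=> uN cu; apply: clique_nbr_sdeg_setD1_lt => //; apply/subsetP => q qQ.
  have [qS1 cq _ _] := in_clique_comp_cnbh (nbh_setD1 uN) cu qQ.
  rewrite inE (subsetP (subD1set S v) q qS1) /=.
  by apply: contraTT cq => nvq; apply: far_no_clique.
have [u0 u0N] : exists u0, u0 \in nbh S v.
  apply/set0Pn; apply: contra (no_clique vS) => /eqP N0.
  by apply: sdeg_eq0_clique; rewrite /sdeg N0 cards0.
have M_ge2 : (2 <= M)%N.
  rewrite leqNgt; apply/negP => M_le1.
  have u0_le := vmax u0 (subsetP (nbh_subset S v) u0 u0N).
  have d0 : sdeg (S :\ v) u0 = 0%N by move: u0_le; rewrite (sdeg_setD1_nbr vS u0N) -/M; lia.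
  by have := nbr_short u0 u0N (sdeg_eq0_clique d0); rewrite d0; lia.
have gain z : z \in S :\ v ->
    c_ext D (sdeg S z) + (if e v z then c_gap D M else 0) <= weight (S :\ v) z.
  move=> zS1; have zS := subsetP (subD1set S v) z zS1.
  case: ifPn => [evz | nvz].
    have zN : z \in nbh S v by rewrite inE zS evz.
    by apply: weight_setD1_nbr => //; [apply: vmax | apply: nbr_short].
  rewrite addr0 /weight (negbTE (far_no_clique z zS1 nvz)).
  by rewrite /sdeg (nbh_restrict (subD1set S v)) //; apply: nbh_setD1_nonadj.
rewrite (big_setD1 v vS) /total_weight; apply: le_trans (ler_sum _ gain).
rewrite big_split /= addrC lerD2l -big_mkcondr /=.
have -> : \sum_(z in S :\ v | e v z) c_gap D M = \sum_(z in nbh S v) c_gap D M.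
  by apply: eq_bigl => z; rewrite !inE; case: eqVneq => [->|]; rewrite ?e_irr ?andbF.
by rewrite sumr_const -mulr_natl; apply: c_ext_le_gap; rewrite M_ge2 sdeg_lt.
Qed.

End NoCliqueComponent.

Lemma total_weight_le_alpha S : total_weight S <= (alpha_in S)%:R.
Proof.
elim: {S}_.+1 {-2}S (ltnSn #|S|) => // n IH S Sn.
have cut A y : A \subset S -> y \in A -> nbh S y \subset A ->
    1 + total_weight (S :\: A) <= (alpha_in S)%:R.
  move=> AS yA yN; apply: le_trans (_ : 1 + (alpha_in (S :\: A))%:R <= _).
    rewrite lerD2l; apply: IH; rewrite -ltnS; apply: leq_trans Sn; rewrite ltnS.
    apply: proper_card; apply/properP; split; first exact: subsetDl.
    by exists y; rewrite ?inE ?yA ?(subsetP AS).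
  by rewrite addrC natr1 ler_nat (alpha_in_setD AS yA).
have [-> | [x0 x0S]] := set_0Vmem S; first by rewrite /total_weight big_set0.
have [/exists_inP[x xS cx] | /exists_inPn no_clique] :=
  boolP [exists x in S, in_clique_comp S x].
  rewrite (total_weight_clique_comp xS cx).
  by apply: cut (cnbh_id xS) (nbh_subset_cnbh S x); apply: cnbh_subset.
have -> : total_weight S = \sum_(z in S) c_ext D (sdeg S z).
  by apply: eq_bigr => z zS; rewrite /weight (negbTE (no_clique z zS)).
have [v vS vmax] := arg_maxnP (sdeg S) x0S.
have [/exists_inP[y yS1 /andP[nvy cy]] | /exists_inPn far] :=
  boolP [exists y in S :\ v, ~~ e v y && in_clique_comp (S :\ v) y].
  apply: le_trans (sum_c_ext_le_cut_clique no_clique vS yS1 nvy cy) (cut _ y _ _ _).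
  - exact: subset_trans (cnbh_subset _ _) (subD1set S v).
  - exact: cnbh_id.
  - by rewrite (cnbh_restrict (subD1set S v)) ?nbh_subset_cnbh ?nbh_setD1_nonadj.
apply: le_trans (sum_c_ext_le_del_maxdeg no_clique vS vmax _) _.
  by move=> y /far; rewrite negb_and negbK => /orP[-> | ->].
apply: le_trans (IH _ _) _; last by rewrite ler_nat alpha_inS ?subD1set.
by rewrite -ltnS; apply: leq_trans Sn; apply: proper_card; apply: properD1.
Qed.

End Weights.

End InducedSubgraphs.

Lemma sum_Vdeg (R : nmodType) (T : finType) (e : rel T) n (F : nat -> R) :
  (forall x, 0 < deg e x <= n)%N ->
  \sum_(1 <= i < n.+1) F i *+ #|Vdeg e i| = \sum_x F (deg e x).
Proof.
move=> deg_range; rewrite (eq_bigr (fun i => \sum_(x | deg e x == i) F i)); last first.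
  by move=> i _; rewrite sumr_const; congr (_ *+ _); apply: eq_card => x; rewrite inE.
rewrite (exchange_big_dep xpredT) //=; apply: eq_bigr => x _.
rewrite big_mkcond (bigD1_seq (deg e x)) ?mem_index_iota ?iota_uniq //= eqxx.
by rewrite big1 ?addr0 // => i /negbTE; rewrite eq_sym => ->.
Qed.

Theorem theorem4 (D D' : nat) (T : finType) (e : rel T) :
  (4 <= D)%N -> (3 <= D')%N -> (D' < D)%N -> in_GD D' e ->
  \sum_(1 <= i < D'.+1) c D i * (#|Vdeg e i|)%:R <= (alpha e)%:R.
Proof.
move=> _ _ D'D [[e_sym e_irr] [conn [[deg_le [z0 deg_z0]] not_complete]]].
have deg_lt x : (deg e x < D)%N := leq_ltn_trans (deg_le x) D'D.
have no_clique x : ~~ in_clique_comp e [set: T] x.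
  apply/negP => /(connected_clique_comp_complete e_sym e_irr z0 conn).
  by rewrite deg_z0; apply: not_complete.
have deg_gt0 x : (0 < deg e x)%N.
  by rewrite lt0n -sdeg_setT; apply: contra (no_clique x) => /eqP/sdeg_eq0_clique.
under eq_bigr do rewrite mulr_natr.
rewrite sum_Vdeg => [|x]; last by rewrite deg_gt0 deg_le.
have -> : \sum_x c D (deg e x) = total_weight e D [set: T].
  apply: eq_big => [x | x _]; first by rewrite inE.
  rewrite /weight (negbTE (no_clique x)) sdeg_setT.
  by case: (deg e x) (deg_gt0 x).
by rewrite alpha_in_setT; apply: total_weight_le_alpha.
Qed.
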